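(* Let $X\in\mathbb{R}^{m\times n}$ and $\lambda>0$, and let $X=U\Sigma V^T$ be the SVD of $X$ with singular values $\sigma_1\ge\sigma_2\ge\cdots\ge 0$. Let $r$ be an integer attaining $\min_k \big(k+\lambda\sum_{i>k}\sigma_i^2\big)$, and let $U_1,\Sigma_1,V_1$ consist of the top $r$ left singular vectors, singular values and right singular vectors of $X$. Then an optimal solution of $$\min_{A\in\mathbb{R}^{m\times n},\,Z\in\mathbb{R}^{n\times n},\,E\in\mathbb{R}^{m\times n}} \|Z\|_*+\lambda\|E\|_F^2\quad\text{s.t.}\quad A=AZ,\ X=A+E$$ is given by $A^*=U_1\Sigma_1V_1^T$, $Z^*=V_1V_1^T$, $E^*=X-A^*$.
   Context: $\|\cdot\|_*$ denotes the nuclear norm and $\|\cdot\|_F$ the Frobenius norm. *)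

(* Real numbers are modelled by an arbitrary real closed
   field R : rcfType (the statement is first-order algebraic, so this is a
   generalisation of the R = reals case). *)
From HB Require Import structures.
From mathcomp Require Import all_boot all_order all_algebra.
Set Implicit Arguments. Unset Strict Implicit. Unset Printing Implicit Defensive.
Import Order.TTheory GRing.Theory Num.Theory.
Local Open Scope ring_scope.

Section Defs.
Variable R : rcfType.

Definition sigma_mx (m n : nat) (s : nat -> R) : 'M[R]_(m, n) :=
  \matrix_(i < m, j < n) (if (i : nat) == j then s i else 0).

(* The same matrix keeping only the top r singular values (Sigma_1 padded
   with zeros), so that U *m sigma_top_mx r s *m V^T = U_1 Sigma_1 V_1^T. *)
Definition sigma_top_mx (m n r : nat) (s : nat -> R) : 'M[R]_(m, n) :=
  \matrix_(i < m, j < n) (if ((i : nat) == j) && (i < r)%N then s i else 0).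

Definition is_svd (m n : nat) (X : 'M[R]_(m, n)) (U : 'M[R]_m) (s : nat -> R)
    (V : 'M[R]_n) : Prop :=
  [/\ U^T *m U = 1%:M, V^T *m V = 1%:M,
      (forall i, (i < minn m n)%N -> 0 <= s i),
      (forall i j, (i <= j)%N -> (j < minn m n)%N -> s j <= s i) &
      X = U *m sigma_mx m n s *m V^T].

Definition is_nuclear_norm (p q : nat) (Z : 'M[R]_(p, q)) (t : R) : Prop :=
  exists (U : 'M[R]_p) (s : nat -> R) (V : 'M[R]_q),
    is_svd Z U s V /\ t = \sum_(i < minn p q) s i.

Definition frob_norm (p q : nat) (E : 'M[R]_(p, q)) : R :=
  Num.sqrt (\sum_(i < p) \sum_(j < q) E i j ^+ 2).

Definition feasible (m n : nat) (X : 'M[R]_(m, n)) (A : 'M[R]_(m, n))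
    (Z : 'M[R]_n) (E : 'M[R]_(m, n)) : Prop :=
  A = A *m Z /\ X = A + E.

(* Value of k + lambda * sum_{i > k} sigma_i^2 (1-based i), i.e. 0-based
   indices k <= i < min m n. *)
Definition rank_cost (m n : nat) (lambda : R) (s : nat -> R) (k : nat) : R :=
  k%:R + lambda * \sum_(k <= i < minn m n) s i ^+ 2.

End Defs.

(* Let A = A Z.  The orthogonal projection Q onto the row space of A has
   trace rank A and satisfies A Q = A and Q Z = Q.  Writing Z = U S V^T,
   rank A = tr (Q Z) = tr (S (V^T Q U)) <= ||Z||_*, since the diagonal entries
   of V^T Q U are at most 1.  On the other hand, by Pythagoras
   ||X - A||_F^2 >= ||X (1 - Q)||_F^2 = sum_i sigma_i^2 (1 - d_i) with
   0 <= d_i <= 1 and sum_i d_i = rank A, which is at least the tail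
   sum_{i >= rank A} sigma_i^2 because the sigma_i are nonincreasing
   (Eckart-Young).  Hence a feasible point costs at least the rank cost of
   k = rank A, which is at least that of r, and the truncated SVD attains
   the latter. *)
From HB Require Import structures.
From mathcomp Require Import all_boot all_order all_algebra.
From mathcomp Require Import ring lra.
Import Order.TTheory GRing.Theory Num.Theory.
Local Open Scope ring_scope.
Set Implicit Arguments. Unset Strict Implicit. Unset Printing Implicit Defensive.

Section RealFieldMatrices.
Variable R : realFieldType.

Lemma mxtrace_mul_trmx p q (M : 'M[R]_(p, q)) :
  \tr (M *m M^T) = \sum_(i < p) \sum_(j < q) M i j ^+ 2.
Proof.
apply: eq_bigr => i _; rewrite mxE.
by apply: eq_bigr => j _; rewrite mxE expr2.
Qed.

Lemma mxtrace_mul_trmx_ge0 p q (M : 'M[R]_(p, q)) : 0 <= \tr (M *m M^T).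
Proof.
by rewrite mxtrace_mul_trmx; do 2![apply: sumr_ge0 => ? _]; apply: sqr_ge0.
Qed.

Lemma mxtrace_mul_trmx_eq0 p q (M : 'M[R]_(p, q)) : \tr (M *m M^T) = 0 -> M = 0.
Proof.
rewrite mxtrace_mul_trmx => M0; apply/matrixP => i j; rewrite mxE.
have row0 : \sum_(j < q) M i j ^+ 2 = 0.
  by apply: (psumr_eq0P _ M0) => // k _; apply: sumr_ge0 => l _; apply: sqr_ge0.
by apply/eqP; rewrite -sqrf_eq0 (psumr_eq0P _ row0) // => k _; apply: sqr_ge0.
Qed.

Lemma row_free_gram_unit k n (B : 'M[R]_(k, n)) :
  row_free B -> B *m B^T \in unitmx.
Proof.
move=> freeB; rewrite -row_free_unit -kermx_eq0; apply/eqP.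
set K := kermx _; have KG0 : K *m (B *m B^T) = 0 by apply: mulmx_ker.
have KB0 : K *m B = 0.
  apply: mxtrace_mul_trmx_eq0.
  by rewrite trmx_mul !mulmxA -(mulmxA K) KG0 mul0mx mxtrace0.
by apply/eqP; rewrite -(mulmx_free_eq0 _ freeB) KB0.
Qed.

Lemma gram_diag_ge_sqr n (M : 'M[R]_n) i : M i i ^+ 2 <= (M^T *m M) i i.
Proof.
rewrite mxE (bigD1 i) //= !mxE -expr2 lerDl.
by apply: sumr_ge0 => j _; rewrite mxE -expr2 sqr_ge0.
Qed.

Lemma diag_le1_of_gram n (M : 'M[R]_n) i : (M^T *m M) i i <= 1 -> M i i <= 1.
Proof.
move=> /(le_trans (gram_diag_ge_sqr M i)); rewrite expr2 => Mii2; nra.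
Qed.

Definition orthoproj n (Q : 'M[R]_n) := Q^T = Q /\ Q *m Q = Q.

Lemma orthoproj_diag n (Q : 'M[R]_n) i : orthoproj Q -> 0 <= Q i i <= 1.
Proof.
case=> Qsym Qidem; have := gram_diag_ge_sqr Q i.
by rewrite Qsym Qidem expr2 => Qii; apply/andP; split; nra.
Qed.

Lemma orthoproj_compl n (Q : 'M[R]_n) : orthoproj Q -> orthoproj (1%:M - Q).
Proof.
case=> Qsym Qidem; split; first by rewrite linearB /= trmx1 Qsym.
by rewrite mulmxBl mul1mx mulmxBr mulmx1 Qidem subrr subr0.
Qed.

Lemma orthoproj_conj n (Q V : 'M[R]_n) :
  V *m V^T = 1%:M -> orthoproj Q -> orthoproj (V^T *m Q *m V).
Proof.
move=> VVt [Qsym Qidem]; split; first by rewrite !trmx_mul trmxK Qsym mulmxA.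
by rewrite -!mulmxA (mulmxA V) VVt mul1mx (mulmxA Q) Qidem.
Qed.

Lemma orthoproj_gram m n (Q : 'M[R]_n) (Y : 'M[R]_(m, n)) :
  orthoproj Q -> Y *m Q *m Y^T = (Y *m Q) *m (Y *m Q)^T.
Proof. by case=> Qsym Qidem; rewrite trmx_mul Qsym !mulmxA -(mulmxA Y Q Q) Qidem. Qed.

(* Pythagoras: [X - A] splits orthogonally along [Q], and [A (1 - Q) = 0]. *)
Lemma mxtrace_proj_compl_le m n (X A : 'M[R]_(m, n)) (Q : 'M[R]_n) :
  orthoproj Q -> A *m Q = A ->
  \tr (X *m (1%:M - Q) *m X^T) <= \tr ((X - A) *m (X - A)^T).
Proof.
move=> projQ AQ; set M := X - A.
have MP : M *m (1%:M - Q) = X *m (1%:M - Q).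
  by rewrite /M mulmxBl [A *m _]mulmxBr mulmx1 AQ subrr subr0.
have -> : M *m M^T = M *m (1%:M - Q) *m M^T + M *m Q *m M^T.
  by rewrite -mulmxDl -mulmxDr subrK mulmx1.
rewrite mxtraceD (orthoproj_gram _ projQ) !(orthoproj_gram _ (orthoproj_compl projQ)).
by rewrite MP lerDl mxtrace_mul_trmx_ge0.
Qed.

Definition row_proj k n (B : 'M[R]_(k, n)) := B^T *m invmx (B *m B^T) *m B.

Section RowProjection.
Variables (k n : nat) (B : 'M[R]_(k, n)).
Hypothesis freeB : row_free B.
Let gram_unit := row_free_gram_unit freeB.

Lemma row_proj_orthoproj : orthoproj (row_proj B).
Proof.
split; first by rewrite !trmx_mul trmxK trmx_inv trmx_mul trmxK mulmxA.
rewrite /row_proj !mulmxA -(mulmxA _ B B^T) -(mulmxA _ (B *m B^T)) mulmxV //.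
by rewrite mulmx1.
Qed.

Lemma mxtrace_row_proj : \tr (row_proj B) = k%:R.
Proof. by rewrite mxtrace_mulC mulmxA mulmxV // mxtrace1. Qed.

Lemma row_proj_id m (A : 'M[R]_(m, n)) : (A <= B)%MS -> A *m row_proj B = A.
Proof.
case/submxP=> C ->; rewrite /row_proj !mulmxA -(mulmxA C B) -(mulmxA _ _ (invmx _)).
by rewrite mulmxV // mulmx1.
Qed.

End RowProjection.

Lemma row_proj_fix k n (B : 'M[R]_(k, n)) (Z : 'M[R]_n) :
  B *m Z = B -> row_proj B *m Z = row_proj B.
Proof. by move=> BZ; rewrite -mulmxA BZ. Qed.

Lemma sum_natr_leq n k : \sum_(i < n) ((k <= i)%N)%:R = (n - k)%:R :> R.
Proof.
have -> : \sum_(i < n) ((k <= i)%N)%:R = \sum_(i < n | (k <= i)%N) 1 :> R.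
  by rewrite [RHS]big_mkcond; apply: eq_bigr => i _; case: leqP.
by rewrite -sumr_const_nat big_geq_mkord.
Qed.

(* A weight [d] in [[0, 1]] of total mass at most [k] can remove at most the
   [k] largest terms of a nonincreasing nonnegative sequence [c]. *)
Lemma sum_tail_le_weighted n k (c d : 'I_n -> R) :
  (forall i, 0 <= c i) -> (forall i j : 'I_n, (i <= j)%N -> c j <= c i) ->
  (forall i, 0 <= d i <= 1) -> \sum_i d i <= k%:R ->
  \sum_(i < n | (k <= i)%N) c i <= \sum_(i < n) c i * (1 - d i).
Proof.
move=> c_ge0 c_noninc d01 dk.
have [nk|kn] := leqP n k.
  rewrite big_pred0 => [|i]; last by rewrite leqNgt (leq_trans (ltn_ord i) nk).
  by apply: sumr_ge0 => i _; rewrite mulr_ge0 // subr_ge0; case/andP: (d01 i).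
(* [th] separates the head [i < k] from the tail [k <= i] of [c]. *)
set th := c (Ordinal kn).
have same_sign i : 0 <= (c i - th) * (1 - d i - ((k <= i)%N)%:R).
  have /andP [di0 di1] := d01 i.
  case: leqP => ki /=.
    by apply: mulr_le0; rewrite subr_le0 ?c_noninc //; lra.
  by apply: mulr_ge0; rewrite subr_ge0 ?c_noninc ?(ltnW ki) //; lra.
have mass : \sum_(i < n) (1 - d i - ((k <= i)%N)%:R) = k%:R - \sum_(i < n) d i.
  rewrite sumrB sumrB sumr_const card_ord sum_natr_leq natrB 1?ltnW //; ring.
have split_gap : \sum_(i < n) c i * (1 - d i) - \sum_(i < n | (k <= i)%N) c i
    = \sum_(i < n) (c i - th) * (1 - d i - ((k <= i)%N)%:R)
      + th * (k%:R - \sum_(i < n) d i).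
  rewrite -mass mulr_sumr -big_split [X in _ - X]big_mkcond -sumrB /=.
  by apply: eq_bigr => i _; case: leqP => _ /=; ring.
rewrite -subr_ge0 split_gap; apply: addr_ge0; first exact: sumr_ge0.
by apply: mulr_ge0; rewrite ?c_ge0 ?subr_ge0.
Qed.

End RealFieldMatrices.

Section SingularValues.
Variable R : rcfType.

Lemma frob_normE m n (M : 'M[R]_(m, n)) : frob_norm M ^+ 2 = \tr (M *m M^T).
Proof. by rewrite sqr_sqrtr -mxtrace_mul_trmx ?mxtrace_mul_trmx_ge0. Qed.

Lemma trmx_sigma_mx m n (f : nat -> R) : (sigma_mx m n f)^T = sigma_mx n m f.
Proof. by apply/matrixP => i j; rewrite !mxE eq_sym; case: eqP => // ->. Qed.

Lemma mul_sigma_mx m n p (f g : nat -> R) :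
  sigma_mx m n f *m sigma_mx n p g =
  sigma_mx m p (fun i => if (i < n)%N then f i * g i else 0).
Proof.
apply/matrixP => i j; rewrite !mxE.
transitivity (\sum_(l < n | l == i :> nat) if (i : nat) == j then f i * g i else 0).
  rewrite [RHS]big_mkcond; apply: eq_bigr => l _; rewrite !mxE eq_sym.
  case: eqP => [->|_]; last by rewrite mul0r.
  by case: eqP => [->|_]; rewrite ?mulr0.
rewrite (big_ord1_eq _ (fun=> if (i : nat) == j then f i * g i else 0)).
by case: eqP; case: ltnP.
Qed.

Lemma sigma_top_mxE m n r (f : nat -> R) :
  sigma_top_mx m n r f = sigma_mx m n (fun i => if (i < r)%N then f i else 0).
Proof. by apply/matrixP => i j; rewrite !mxE; case: eqP; case: ltnP. Qed.

Lemma eq_sigma_mx m n (f g : nat -> R) :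
  (forall i, (i < minn m n)%N -> f i = g i) -> sigma_mx m n f = sigma_mx m n g.
Proof.
move=> fg; apply/matrixP => i j; rewrite !mxE; case: eqP => // ij.
by rewrite fg // leq_min ltn_ord ij ltn_ord.
Qed.

Lemma mxtrace_sigma_mulmx n (g : nat -> R) (W : 'M[R]_n) :
  \tr (sigma_mx n n g *m W) = \sum_(i < n) g i * W i i.
Proof.
apply: eq_bigr => i _; rewrite mxE (bigD1 i) //= big1 ?addr0 => [|l il].
  by rewrite mxE eqxx.
by rewrite mxE val_eqE eq_sym (negPf il) mul0r.
Qed.

Lemma mxtrace_sigma_mx n (g : nat -> R) : \tr (sigma_mx n n g) = \sum_(i < n) g i.
Proof.
rewrite -[sigma_mx _ _ _]mulmx1 mxtrace_sigma_mulmx.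
by apply: eq_bigr => i _; rewrite mxE eqxx mulr1.
Qed.

Lemma mxtrace_sigma_mulmx_le n (g : nat -> R) (M : 'M[R]_n) :
  (forall i : 'I_n, 0 <= g i) -> (forall i, M i i <= 1) ->
  \tr (sigma_mx n n g *m M) <= \sum_(i < n) g i.
Proof.
move=> g_ge0 M_le1; rewrite mxtrace_sigma_mulmx; apply: ler_sum => i _.
by rewrite -[X in _ <= X]mulr1 ler_wpM2l.
Qed.

Lemma sum_tail_minn m n k (F : nat -> R) :
  \sum_(k <= i < minn m n) F i =
  \sum_(i < n | (k <= i)%N) (if (i < m)%N then F i else 0).
Proof.
rewrite big_geq_mkord (big_ord_widen_cond n) ?geq_minr // -big_mkcondr.
by apply: eq_bigl => i; rewrite leq_min ltn_ord andbT andbC.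
Qed.

Lemma mxtrace_orth_conj m n (U : 'M[R]_m) (S : 'M[R]_(m, n)) (V W : 'M[R]_n) :
  U^T *m U = 1%:M ->
  \tr (U *m S *m V^T *m W *m (U *m S *m V^T)^T) = \tr (S^T *m S *m (V^T *m W *m V)).
Proof.
move=> UtU; rewrite !trmx_mul !trmxK !mulmxA mxtrace_mulC !mulmxA UtU mul1mx.
by rewrite mxtrace_mulC !mulmxA.
Qed.

Lemma frob_norm_orth_sigma m n (U : 'M[R]_m) (V : 'M[R]_n) (f : nat -> R) :
  U^T *m U = 1%:M -> V^T *m V = 1%:M ->
  frob_norm (U *m sigma_mx m n f *m V^T) ^+ 2 = \sum_(i < minn m n) f i ^+ 2.
Proof.
move=> UtU VtV; rewrite frob_normE -[X in \tr (X *m _)]mulmx1 mxtrace_orth_conj //.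
rewrite mulmx1 VtV mulmx1 trmx_sigma_mx mul_sigma_mx mxtrace_sigma_mx.
by rewrite -(sum_tail_minn m n 0 (fun i => f i ^+ 2)) big_mkord.
Qed.

Lemma svd_tail_le_proj_compl m n (X : 'M[R]_(m, n)) U s V (Q : 'M[R]_n) k :
  is_svd X U s V -> orthoproj Q -> \tr Q = k%:R ->
  \sum_(k <= i < minn m n) s i ^+ 2 <= \tr (X *m (1%:M - Q) *m X^T).
Proof.
case=> UtU VtV s_ge0 s_noninc -> projQ trQ.
set P := V^T *m Q *m V.
have projP : orthoproj P := orthoproj_conj (mulmx1C VtV) projQ.
rewrite mxtrace_orth_conj // mulmxBr mulmx1 mulmxBl VtV -/P.
rewrite trmx_sigma_mx mul_sigma_mx mxtrace_sigma_mulmx sum_tail_minn.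
have -> : \sum_(i < n) (if (i < m)%N then s i * s i else 0) * (1%:M - P) i i
    = \sum_(i < n) (if (i < m)%N then s i ^+ 2 else 0) * (1 - P i i).
  by apply: eq_bigr => i _; rewrite !mxE eqxx.
apply: sum_tail_le_weighted => [i | i j ij | i | ].
- by case: ifP => // _; apply: sqr_ge0.
- have [jm|_] := ltnP j m; last by case: ifP => // _; apply: sqr_ge0.
  have jN : (j < minn m n)%N by rewrite leq_min jm ltn_ord.
  rewrite (leq_ltn_trans ij jm) ler_sqr ?nnegrE ?s_noninc ?s_ge0 //.
  exact: leq_ltn_trans ij jN.
- exact: orthoproj_diag.
- suff -> : \sum_(i < n) P i i = \tr Q by rewrite trQ.
  by rewrite -[LHS]/(\tr P) mxtrace_mulC mulmxA (mulmx1C VtV) mul1mx.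
Qed.

Lemma mxtrace_orthoproj_le_nuclear_norm n (Q Z : 'M[R]_n) t :
  orthoproj Q -> Q *m Z = Q -> is_nuclear_norm Z t -> \tr Q <= t.
Proof.
move=> projQ QZ [U [s [V [[UtU VtV s_ge0 _ ZE] ->]]]]; rewrite minnn in s_ge0 *.
set M := V^T *m Q *m U.
have -> : \tr Q = \tr (sigma_mx n n s *m M).
  by rewrite -{1}QZ ZE !mulmxA mxtrace_mulC !mulmxA mxtrace_mulC !mulmxA.
have gramM : M^T *m M = U^T *m Q *m U.
  rewrite /M !trmx_mul trmxK projQ.1 -!mulmxA (mulmxA V) (mulmx1C VtV) mul1mx.
  by rewrite (mulmxA Q) projQ.2.
apply: mxtrace_sigma_mulmx_le => i; first exact: s_ge0.
apply: diag_le1_of_gram; rewrite gramM.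
by case/andP: (orthoproj_diag i (orthoproj_conj (mulmx1C UtU) projQ)).
Qed.

Lemma nuclear_norm_conj_sigma_le n (V : 'M[R]_n) (g : nat -> R) t :
  V^T *m V = 1%:M -> (forall i : 'I_n, 0 <= g i) ->
  is_nuclear_norm (V *m sigma_mx n n g *m V^T) t -> t <= \sum_(i < n) g i.
Proof.
move=> VtV g_ge0 [U' [s' [V' [[U'tU' V'tV' _ _ Zsvd] ->]]]]; rewrite minnn.
set O := V^T *m V' *m U'^T *m V.
have S'E : sigma_mx n n s' = U'^T *m (V *m sigma_mx n n g *m V^T) *m V'.
  by rewrite Zsvd !mulmxA U'tU' mul1mx -mulmxA V'tV' mulmx1.
have -> : \sum_(i < n) s' i = \tr (sigma_mx n n g *m O).
  rewrite -mxtrace_sigma_mx S'E /O !mulmxA.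
  by rewrite mxtrace_mulC !mulmxA mxtrace_mulC !mulmxA mxtrace_mulC !mulmxA.
have OtO : O^T *m O = 1%:M.
  rewrite /O !trmx_mul !trmxK !mulmxA -(mulmxA _ V V^T) (mulmx1C VtV) mulmx1.
  rewrite -(mulmxA _ V'^T V') V'tV' mulmx1 -(mulmxA _ U' U'^T) (mulmx1C U'tU').
  by rewrite mulmx1 VtV.
apply: mxtrace_sigma_mulmx_le => // i; apply: diag_le1_of_gram.
by rewrite OtO mxE eqxx.
Qed.

Lemma rank_le_nuclear_norm m n (A : 'M[R]_(m, n)) (Z : 'M[R]_n) t :
  A = A *m Z -> is_nuclear_norm Z t -> (\rank A)%:R <= t.
Proof.
move=> AZ; have freeB := row_base_free A.
rewrite -(mxtrace_row_proj freeB); apply: mxtrace_orthoproj_le_nuclear_norm.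
  exact: row_proj_orthoproj.
have /submxP [D ->] : (row_base A <= A)%MS by rewrite eq_row_base.
by apply: row_proj_fix; rewrite -mulmxA -AZ.
Qed.

Theorem eckart_young m n (A X : 'M[R]_(m, n)) U s V :
  is_svd X U s V -> \sum_(\rank A <= i < minn m n) s i ^+ 2 <= frob_norm (X - A) ^+ 2.
Proof.
move=> svdX; have freeB := row_base_free A.
have projQ := row_proj_orthoproj freeB.
rewrite frob_normE; apply: le_trans (mxtrace_proj_compl_le X projQ _).
  exact: svd_tail_le_proj_compl svdX projQ (mxtrace_row_proj freeB).
by apply: (row_proj_id freeB); rewrite eq_row_base.
Qed.

Lemma nuclear_norm_top_proj_le n (V : 'M[R]_n) r t :
  V^T *m V = 1%:M -> (r <= n)%N ->
  is_nuclear_norm (V *m sigma_top_mx n n r (fun _ => 1) *m V^T) t -> t <= r%:R.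
Proof.
move=> VtV rn; rewrite sigma_top_mxE => /nuclear_norm_conj_sigma_le.
move=> /(_ VtV) t_le; apply: (le_trans (t_le _)) => [i|]; first by case: ifP.
by rewrite -big_mkcond -(big_ord_widen _ (fun=> 1)) // sumr_const card_ord.
Qed.

Lemma frob_norm_svd_tail m n (X : 'M[R]_(m, n)) U s V r :
  is_svd X U s V ->
  frob_norm (X - U *m sigma_top_mx m n r s *m V^T) ^+ 2 =
  \sum_(r <= i < minn m n) s i ^+ 2.
Proof.
case=> UtU VtV _ _ ->; rewrite -mulmxBl -mulmxBr sigma_top_mxE.
have -> : sigma_mx m n s - sigma_mx m n (fun i => if (i < r)%N then s i else 0)
    = sigma_mx m n (fun i => if (r <= i)%N then s i else 0).
  apply/matrixP => i j; rewrite !mxE.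
  by case: (_ == _); rewrite ?subr0 //; case: leqP; rewrite ?subr0 ?subrr.
rewrite frob_norm_orth_sigma // big_geq_mkord [RHS]big_mkcond.
by apply: eq_bigr => i _; case: leqP; rewrite ?expr0n.
Qed.

Lemma rank_cost_argmin_le m n lambda (s : nat -> R) r :
  (forall k, rank_cost m n lambda s r <= rank_cost m n lambda s k) ->
  (r <= minn m n)%N.
Proof.
move=> r_opt; rewrite leqNgt; apply/negP => lt_r.
have := r_opt (minn m n); rewrite /rank_cost !big_geq ?(ltnW lt_r) //.
by rewrite !mulr0 !addr0 ler_nat leqNgt lt_r.
Qed.

Lemma sigma_top_mx_mul_proj m n r (f : nat -> R) :
  sigma_top_mx m n r f *m sigma_top_mx n n r (fun _ => 1) = sigma_top_mx m n r f.
Proof.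
rewrite !sigma_top_mxE mul_sigma_mx; apply: eq_sigma_mx => i.
by rewrite leq_min => /andP [_ ->]; case: ifP; rewrite ?mulr1 ?mulr0.
Qed.

End SingularValues.

Theorem corollary2 (R : rcfType) (m n : nat) (X : 'M[R]_(m, n)) (lambda : R)
    (U : 'M[R]_m) (s : nat -> R) (V : 'M[R]_n) (r : nat) :
  0 < lambda ->
  is_svd X U s V ->
  (forall k : nat, rank_cost m n lambda s r <= rank_cost m n lambda s k) ->
  let Astar := U *m sigma_top_mx m n r s *m V^T in
  let Zstar := V *m sigma_top_mx n n r (fun _ => 1) *m V^T in
  let Estar := X - Astar in
  feasible X Astar Zstar Estar /\
  forall (A : 'M[R]_(m, n)) (Z : 'M[R]_n) (E : 'M[R]_(m, n)),
    feasible X A Z E ->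
    forall tstar t : R,
      is_nuclear_norm Zstar tstar -> is_nuclear_norm Z t ->
      tstar + lambda * frob_norm Estar ^+ 2 <= t + lambda * frob_norm E ^+ 2.
Proof.
move=> lambda_gt0 svdX r_opt Astar Zstar Estar.
have [_ VtV _ _ _] := svdX.
have r_le := rank_cost_argmin_le r_opt.
split.
  split; last by rewrite addrC subrK.
  rewrite /Astar /Zstar !mulmxA -(mulmxA _ V^T V) VtV mulmx1.
  by rewrite -(mulmxA U _ (sigma_top_mx n n r _)) sigma_top_mx_mul_proj.
move=> A Z E [AZ XAE] tstar t tstarE tE.
have -> : E = X - A by rewrite XAE addrC addKr.
have tstar_le := nuclear_norm_top_proj_le VtV (leq_trans r_le (geq_minr m n)) tstarE.
have rank_le := rank_le_nuclear_norm AZ tE.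
have tail_le := ler_wpM2l (ltW lambda_gt0) (eckart_young A svdX).
have := r_opt (\rank A); rewrite /rank_cost /Estar frob_norm_svd_tail //.
lra.
Qed.
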